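(* Let $A$ be a subalgebra of a $K$-algebra $E$, let $\Delta\subseteq\mathrm{Der}_A(E)$, let $\mathfrak{a}$ be a nonzero $\Delta$-stable ideal of the algebra $N_\Delta(E)$, and let $\mathfrak{a}_0=\mathfrak{a}\cap N_\Delta(E)_0=\mathfrak{a}\cap E^\Delta$. Then: (1) $\mathfrak{a}_0$ is a nonzero ideal of the algebra $N_\Delta(E)_0$, and $\mathfrak{a}'=N_\Delta(E)\mathfrak{a}_0N_\Delta(E)$ is a nonzero ideal of $N_\Delta(E)$ such that $\mathfrak{a}'\subseteq\mathfrak{a}$ and $\mathfrak{a}'\cap N_\Delta(E)_0=\mathfrak{a}_0$. (2) If, in addition, $N_\Delta(E)_0$ is commutative, then $[N_\Delta(E)_1,\mathfrak{a}_0]\subseteq\mathfrak{a}_0$.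
   Context: $\mathrm{Der}_A(E)$ denotes the set of derivations of $E$ that are also (left) $A$-module homomorphisms. For $i\geq 1$, $\Delta^i=\{\delta_1\cdots\delta_i\mid\delta_j\in\Delta\}$; $N_\Delta(E)_i=\{e\in E\mid\Delta^{i+1}e=0\}$ for $i\geq 0$, $N_\Delta(E)=\bigcup_{i\ge0}N_\Delta(E)_i$ (a subalgebra of $E$), and $E^\Delta=\bigcap_{\delta\in\Delta}\ker\delta$. An ideal $\mathfrak{a}$ of $N_\Delta(E)$ is $\Delta$-stable if $\delta(\mathfrak{a})\subseteq\mathfrak{a}$ for all $\delta\in\Delta$. $[x,y]=xy-yx$. *)

From HB Require Import structures.
From mathcomp Require Import all_boot all_order all_algebra.
Set Implicit Arguments. Unset Strict Implicit. Unset Printing Implicit Defensive.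
Import GRing.Theory.
Local Open Scope ring_scope.

Section Defs.
Variables (K : fieldType) (E : algType K).

Definition is_derivation (d : E -> E) : Prop :=
  [/\ forall x y, d (x + y) = d x + d y,
      forall (k : K) x, d (k *: x) = k *: d x &
      forall x y, d (x * y) = d x * y + x * d y].

Definition in_DerA (A : {pred E}) (d : E -> E) : Prop :=
  is_derivation d /\ forall a x, a \in A -> d (a * x) = a * d x.

(* killed Delta n e  <->  Delta^n e = 0, i.e. d_1 (d_2 (... (d_n e))) = 0
   for all d_1, ..., d_n in Delta (Delta^0 e = e). *)
Fixpoint killed (Delta : (E -> E) -> Prop) (n : nat) (e : E) : Prop :=
  match n with
  | 0 => e = 0
  | n'.+1 => forall d, Delta d -> killed Delta n' (d e)
  end.

Definition Nfilt (Delta : (E -> E) -> Prop) (i : nat) (e : E) : Prop :=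
  killed Delta i.+1 e.

Definition Nalg (Delta : (E -> E) -> Prop) (e : E) : Prop :=
  exists i, Nfilt Delta i e.

Definition Econst (Delta : (E -> E) -> Prop) (e : E) : Prop :=
  forall d, Delta d -> d e = 0.

Definition is_ideal (R I : E -> Prop) : Prop :=
  [/\ forall x, I x -> R x,
      I 0,
      forall x y, I x -> I y -> I (x - y),
      forall (k : K) x, I x -> I (k *: x) &
      forall r x, R r -> I x -> I (r * x) /\ I (x * r)].

Definition nonzero_set (I : E -> Prop) : Prop := exists x, I x /\ x <> 0.

Definition Delta_stable (Delta : (E -> E) -> Prop) (I : E -> Prop) : Prop :=
  forall d x, Delta d -> I x -> I (d x).

Definition prod3 (R I : E -> Prop) (e : E) : Prop :=
  exists s : seq (E * E * E),
    (forall t, t \in s -> [/\ R t.1.1, I t.1.2 & R t.2]) /\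
    e = \sum_(t <- s) t.1.1 * t.1.2 * t.2.

End Defs.

From HB Require Import structures.
From mathcomp Require Import all_boot all_order all_algebra.
From Stdlib Require Import Classical.
Import GRing.Theory.
Set Implicit Arguments. Unset Strict Implicit.
Local Open Scope ring_scope.

(* Each derivation in Delta lowers the filtration degree of N_Delta(E) by one.
   Starting from a nonzero element of the Delta-stable ideal a and applying
   derivations for as long as the result stays nonzero, one ends in a nonzero
   element of a killed by all of Delta, i.e. in a_0.  Since 1 lies in N_Delta(E),
   a_0 is contained in a' = N a_0 N, and a' is contained in a because a is an
   ideal; hence a' meets N_Delta(E)_0 exactly in a_0.  For (2), the Leibniz rule
   gives d[x, y] = [d x, y] when d y = 0, and d x lies in the commutative
   algebra N_Delta(E)_0 when x lies in N_Delta(E)_1. *)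

Section Derivation.
Variables (K : fieldType) (E : algType K) (d : E -> E).
Hypothesis hd : is_derivation d.

Lemma derivationD x y : d (x + y) = d x + d y.
Proof. by case: hd. Qed.

Lemma derivationZ (k : K) x : d (k *: x) = k *: d x.
Proof. by case: hd. Qed.

Lemma derivationM x y : d (x * y) = d x * y + x * d y.
Proof. by case: hd. Qed.

Lemma derivationB x y : d (x - y) = d x - d y.
Proof. by rewrite -scaleN1r derivationD derivationZ scaleN1r. Qed.

Lemma derivation0 : d 0 = 0.
Proof. by have := derivationB 0 0; rewrite !subrr. Qed.

Lemma derivation1 : d 1 = 0.
Proof.
have := derivationM 1 1; rewrite !mul1r mulr1 => d1.
by apply: (@addrI _ (d 1)); rewrite -d1 addr0.
Qed.

Lemma derivation_commutator x y :
  d (x * y - y * x) = (d x * y - y * d x) + (x * d y - d y * x).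
Proof. by rewrite derivationB !derivationM opprD [- _ - _]addrC addrACA. Qed.

End Derivation.

Section Subalgebra.
Variables (K : fieldType) (E : algType K).

Definition is_subalgebra (R : E -> Prop) : Prop :=
  [/\ R 1,
      forall x y, R x -> R y -> R (x - y),
      forall (k : K) x, R x -> R (k *: x) &
      forall x y, R x -> R y -> R (x * y)].

Variable R : E -> Prop.
Hypothesis hR : is_subalgebra R.

Lemma subalgebra0 : R 0.
Proof. by case: hR => R1 RB _ _; rewrite -(subrr 1); apply: RB. Qed.

Lemma subalgebraD x y : R x -> R y -> R (x + y).
Proof.
case: hR => _ RB RZ _ Rx Ry.
have -> : x + y = x - (-1) *: y by rewrite scaleN1r opprK.
by apply: RB => //; apply: RZ.
Qed.

End Subalgebra.

Section Ideal.
Variables (K : fieldType) (E : algType K) (R I : E -> Prop).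
Hypothesis hI : is_ideal R I.

Lemma idealD x y : I x -> I y -> I (x + y).
Proof.
case: hI => _ I0 IB _ _ Ix Iy.
have -> : x + y = x - (0 - y) by rewrite sub0r opprK.
by apply: (IB) => //; apply: IB.
Qed.

Lemma ideal_restrict (S : E -> Prop) :
  is_subalgebra S -> (forall x, S x -> R x) ->
  is_ideal S (fun x => I x /\ S x).
Proof.
move=> hS SR; have S0 := subalgebra0 hS.
case: hS => _ SB SZ SM; case: hI => _ I0 IB IZ IM; split.
- by move=> x [].
- by [].
- by move=> x y [Ix Sx] [Iy Sy]; split; [apply: IB | apply: SB].
- by move=> k x [Ix Sx]; split; [apply: IZ | apply: SZ].
- move=> r x Sr [Ix Sx]; have [Irx Ixr] := IM r x (SR r Sr) Ix.
  by split; split => //; apply: SM.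
Qed.

End Ideal.

Section Prod3.
Variables (K : fieldType) (E : algType K) (R I : E -> Prop).

Lemma prod3_ind (P : E -> Prop) :
  P 0 -> (forall x y, P x -> P y -> P (x + y)) ->
  (forall r x s, R r -> I x -> R s -> P (r * x * s)) ->
  forall y, prod3 R I y -> P y.
Proof.
move=> P0 PD Pmono y [s [hs ->]]; rewrite big_seq.
by apply: big_ind => // t /hs [Rr Ix Rs]; apply: Pmono.
Qed.

Lemma prod3_0 : prod3 R I 0.
Proof. by exists [::]; rewrite big_nil. Qed.

Lemma prod3D x y : prod3 R I x -> prod3 R I y -> prod3 R I (x + y).
Proof.
move=> [s [hs ->]] [s' [hs' ->]]; exists (s ++ s'); rewrite big_cat; split=> //.
by move=> t; rewrite mem_cat => /orP [/hs | /hs'].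
Qed.

Lemma prod3_monomial r x s : R r -> I x -> R s -> prod3 R I (r * x * s).
Proof.
move=> Rr Ix Rs; exists [:: (r, x, s)]; rewrite big_seq1; split=> //.
by move=> t; rewrite inE => /eqP ->.
Qed.

Lemma prod3_additive (h : {additive E -> E}) :
  (forall r x s, R r -> I x -> R s -> prod3 R I (h (r * x * s))) ->
  forall y, prod3 R I y -> prod3 R I (h y).
Proof.
move=> hmono; apply: prod3_ind => [|x y hx hy|//].
- by rewrite raddf0; apply: prod3_0.
- by rewrite raddfD; apply: prod3D.
Qed.

Lemma prod3_sub (J : E -> Prop) :
  is_ideal R J -> (forall x, I x -> J x) -> forall y, prod3 R I y -> J y.
Proof.
move=> hJ IJ; have [_ J0 _ _ JM] := hJ.
apply: prod3_ind => [//|x y Jx Jy|r x s Rr /IJ Jx Rs]; first by apply: (idealD hJ).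
exact: (JM s _ Rs (JM r x Rr Jx).1).2.
Qed.

Hypothesis hR : is_subalgebra R.

Lemma prod3_id x : I x -> prod3 R I x.
Proof.
case: hR => R1 _ _ _ Ix.
by rewrite -[x]mulr1 -[x]mul1r; apply: prod3_monomial.
Qed.

Lemma prod3_ideal : (forall x, I x -> R x) -> is_ideal R (prod3 R I).
Proof.
move=> IR; have [_ _ RZ RM] := hR.
have prod3Z (k : K) : forall y, prod3 R I y -> prod3 R I (k *: y).
  apply: (prod3_additive (h := *:%R k)) => r x s Rr Ix Rs /=.
  by rewrite !scalerAl; apply: prod3_monomial => //; apply: RZ.
split.
- apply: prod3_ind => [|x y|r x s Rr /IR Rx Rs]; first exact: subalgebra0.
    exact: subalgebraD.
  by apply: (RM) => //; apply: RM.
- exact: prod3_0.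
- by move=> x y hx hy; rewrite -scaleN1r; apply: prod3D => //; apply: prod3Z.
- exact: prod3Z.
- move=> r y Rr hy; split.
    apply: (prod3_additive (h := GRing.mull_fun r idfun) _ hy) => r' x s Rr' Ix Rs /=.
    by rewrite !mulrA; apply: prod3_monomial => //; apply: RM.
  apply: (prod3_additive (h := GRing.mulr_fun r idfun) _ hy) => r' x s Rr' Ix Rs /=.
  by rewrite -mulrA; apply: prod3_monomial => //; apply: RM.
Qed.

End Prod3.

Section Filtration.
Variables (K : fieldType) (E : algType K) (Delta : (E -> E) -> Prop).

Lemma Delta_stable_nonzero_Nfilt0 (I : E -> Prop) :
  Delta_stable Delta I -> (forall x, I x -> Nalg Delta x) -> nonzero_set I ->
  nonzero_set (fun x => I x /\ Nfilt Delta 0 x).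
Proof.
move=> hI IN [x [Ix x0]]; have [i] := IN x Ix.
elim: i x Ix x0 => [|i IHi] x Ix x0 hx; first by exists x.
case: (classic (exists2 d, Delta d & d x <> 0)) => [[d hd dx0] | hnone].
  exact: IHi (d x) (hI d x hd Ix) dx0 (hx d hd).
exists x; split=> //; split=> // d hd.
by apply: NNPP => dx0; apply: hnone; exists d.
Qed.

Lemma killedSE n x :
  killed Delta n.+1 x = forall d, Delta d -> killed Delta n (d x).
Proof. by []. Qed.

Hypothesis hD : forall d, Delta d -> is_derivation d.

Lemma killed0 n : killed Delta n 0.
Proof. by elim: n => [|n IHn] //= d /hD /derivation0 ->. Qed.

Lemma killedS n x : killed Delta n x -> killed Delta n.+1 x.
Proof.
elim: n x => [|n IHn] x /=; first by move=> -> d /hD /derivation0 ->.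
by move=> hx d hd; apply/IHn/hx.
Qed.

Lemma killed_mono m n x : (m <= n)%N -> killed Delta m x -> killed Delta n x.
Proof.
move=> /subnK <-; elim: (n - m)%N => [//|k IHk] hx.
by rewrite addSn; apply/killedS/IHk.
Qed.

Lemma killedD n x y :
  killed Delta n x -> killed Delta n y -> killed Delta n (x + y).
Proof.
elim: n x y => [|n IHn] x y /=; first by move=> -> ->; rewrite addr0.
by move=> hx hy d hd; rewrite (derivationD (hD hd)); apply: IHn; [apply: hx | apply: hy].
Qed.

Lemma killedZ n (k : K) x : killed Delta n x -> killed Delta n (k *: x).
Proof.
elim: n x => [|n IHn] x /=; first by move=> ->; rewrite scaler0.
by move=> hx d hd; rewrite (derivationZ (hD hd)); apply/IHn/hx.
Qed.

Lemma killedB n x y :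
  killed Delta n x -> killed Delta n y -> killed Delta n (x - y).
Proof. by move=> hx hy; rewrite -scaleN1r; apply/killedD/killedZ. Qed.

Lemma NfiltM p q x y :
  Nfilt Delta p x -> Nfilt Delta q y -> Nfilt Delta (p + q) (x * y).
Proof.
elim: p q x y => [|p IHp] q x y; elim: q x y => [|q IHq] x y hx hy;
  rewrite /Nfilt killedSE => d hd; rewrite (derivationM (hD hd)).
- by rewrite (hx d hd) (hy d hd) mul0r mulr0 addr0; apply: killed0.
- by rewrite (hx d hd) mul0r add0r; apply: IHq (hy d hd).
- by rewrite (hy d hd) mulr0 addr0; apply: IHp (hx d hd) hy.
- apply: killedD; first exact: IHp (hx d hd) hy.
  by rewrite addnS; apply: IHq (hy d hd).
Qed.

Lemma Nfilt0_1 : Nfilt Delta 0 1.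
Proof. by rewrite /Nfilt killedSE => d /hD /derivation1 ->. Qed.

Lemma Nfilt0_subalgebra : is_subalgebra (Nfilt Delta 0).
Proof.
split; [exact: Nfilt0_1 | exact: killedB | exact: killedZ |].
exact: (@NfiltM 0 0).
Qed.

Lemma Nalg_subalgebra : is_subalgebra (Nalg Delta).
Proof.
split.
- by exists 0%N; apply: Nfilt0_1.
- move=> x y [i hx] [j hy]; exists (i + j)%N.
  by apply: killedB; [apply: (killed_mono _ hx) | apply: (killed_mono _ hy)];
    rewrite ltnS ?leq_addr ?leq_addl.
- by move=> k x [i hx]; exists i; apply: killedZ.
- by move=> x y [i hx] [j hy]; exists (i + j)%N; apply: NfiltM.
Qed.

Lemma Nfilt1_commutator x y :
  (forall u v, Nfilt Delta 0 u -> Nfilt Delta 0 v -> u * v = v * u) ->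
  Nfilt Delta 1 x -> Nfilt Delta 0 y -> Nfilt Delta 0 (x * y - y * x).
Proof.
move=> comm0 hx hy; rewrite /Nfilt killedSE => d hd.
rewrite (derivation_commutator (hD hd)) (hy d hd) mulr0 mul0r subr0 addr0.
by rewrite comm0 ?subrr //; apply: hx.
Qed.

End Filtration.

Theorem theorem1p6 (K : fieldType) (E : algType K) (A : {pred E})
    (hA : subalg_closed A)
    (Delta : (E -> E) -> Prop) (hDelta : forall d, Delta d -> in_DerA A d)
    (a : E -> Prop)
    (ha_ideal : is_ideal (Nalg Delta) a)
    (ha_nz : nonzero_set a)
    (ha_stable : Delta_stable Delta a) :
  let a0 := fun x => a x /\ Nfilt Delta 0 x in
  (* N_Delta(E)_0 = E^Delta, so a0 = a ∩ E^Delta *)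
  (forall x, a0 x <-> a x /\ Econst Delta x) /\
  (* (1) *)
  (is_ideal (Nfilt Delta 0) a0 /\ nonzero_set a0 /\
   let a' := prod3 (Nalg Delta) a0 in
   is_ideal (Nalg Delta) a' /\ nonzero_set a' /\
   (forall x, a' x -> a x) /\
   (forall x, (a' x /\ Nfilt Delta 0 x) <-> a0 x)) /\
  (* (2) *)
  ((forall x y, Nfilt Delta 0 x -> Nfilt Delta 0 y -> x * y = y * x) ->
   forall x y, Nfilt Delta 1 x -> a0 y -> a0 (x * y - y * x)).
Proof.
move=> a0; have hD d : Delta d -> is_derivation d by case/hDelta.
have [aN _ aB _ aM] := ha_ideal.
have a0_ideal : is_ideal (Nfilt Delta 0) a0.
  by apply: (ideal_restrict ha_ideal (Nfilt0_subalgebra hD)) => x hx; exists 0%N.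
have a0_nz : nonzero_set a0 := Delta_stable_nonzero_Nfilt0 ha_stable aN ha_nz.
have a0N x : a0 x -> Nalg Delta x by case=> /aN.
have a'a : forall x, prod3 (Nalg Delta) a0 x -> a x.
  by apply: prod3_sub ha_ideal _ => x [].
have a0a' : forall x, a0 x -> prod3 (Nalg Delta) a0 x.
  exact: prod3_id (Nalg_subalgebra hD).
split; first by [].
split.
  do 2!split=> //; move=> a'.
  split; first exact: prod3_ideal (Nalg_subalgebra hD) a0N.
  split; first by case: a0_nz => x [hx x0]; exists x; split=> //; apply: a0a'.
  split; first exact: a'a.
  move=> x; split=> [[/a'a ax hx] // | hx].
  by split; [apply: a0a' | case: hx].
move=> comm0 x y hx [ay hy]; split; last exact: Nfilt1_commutator.
have [axy ayx] : a (x * y) /\ a (y * x) by apply: aM => //; exists 1%N.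
exact: aB.
Qed.
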